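(* Let $\mathcal A$ be a finitely generated group, $X$ a finite generating system, and $\mathcal K$ a cyclic subgroup of prime order. Then in the graph $\Gamma=\mathrm{Sch}(\mathcal A,\mathcal K,X)$, each orbit of $\mathrm{Aut}(\Gamma)$ on vertices is a finite union of $X$-orbits.
   Context: The Schreier graph $\mathrm{Sch}(\mathcal A,\mathcal K,X)$ has vertices the right cosets $\mathcal Kg$ and, for each coset and each $x$ with $x\in X$ or $x^{-1}\in X$, an edge labeled $x$ from $\mathcal Kg$ to $\mathcal Kgx$ whose inverse is the edge labeled $x^{-1}$ from $\mathcal Kgx$. $\mathrm{Aut}(\Gamma)$ is the group of all graph automorphisms (ignoring labels); an $X$-orbit is an orbit on vertices of the subgroup of label-preserving automorphisms. *)

From mathcomp Require Import all_boot.
From Stdlib Require List FunctionalExtensionality PropExtensionality.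
Set Implicit Arguments. Unset Strict Implicit. Unset Printing Implicit Defensive.

Record group := Group {
  gcar :> Type;
  gmul : gcar -> gcar -> gcar;
  gone : gcar;
  ginv : gcar -> gcar;
  gmulA : forall x y z, gmul x (gmul y z) = gmul (gmul x y) z;
  gmul1g : forall x, gmul gone x = x;
  gmulg1 : forall x, gmul x gone = x;
  gmulVg : forall x, gmul (ginv x) x = gone;
  gmulgV : forall x, gmul x (ginv x) = gone }.

Section Groups.
Variable G : group.

Definition gpow (x : G) (n : nat) : G := iter n (fun y => gmul y x) (gone G).

Definition has_order (x : G) (p : nat) : Prop :=
  0 < p /\ gpow x p = gone G /\ forall m, 0 < m < p -> gpow x m <> gone G.

Definition cyclic_sub (x : G) : G -> Prop := fun h => exists n, h = gpow x n.

Inductive generated (X : list G) : G -> Prop :=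
  | gen_one : generated X (gone G)
  | gen_mulX g x : generated X g -> List.In x X -> generated X (gmul g x)
  | gen_mulXV g x : generated X g -> List.In x X -> generated X (gmul g (ginv x)).

Definition generates (X : list G) : Prop := forall g, generated X g.

Lemma ginvK (x : G) : ginv (ginv x) = x.
Proof.
have := gmulA (ginv (ginv x)) (ginv x) x.
by rewrite gmulVg gmulg1 gmulVg gmul1g => ->.
Qed.

Definition rcoset (K : G -> Prop) (g : G) : G -> Prop :=
  fun h => exists k, K k /\ h = gmul k g.

Definition set_rmul (S : G -> Prop) (s : G) : G -> Prop :=
  fun h => exists h', S h' /\ h = gmul h' s.

Lemma rcoset_rmul K g s : set_rmul (rcoset K g) s = rcoset K (gmul g s).
Proof.
apply: FunctionalExtensionality.functional_extensionality => h.
apply: PropExtensionality.propositional_extensionality; split.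
- case=> h' [[k [Kk ->]] ->]; exists k; split=> //; by rewrite gmulA.
- case=> k [Kk ->]; exists (gmul k g); split; first by exists k.
  by rewrite gmulA.
Qed.

Section Schreier.
Variables (K : G -> Prop) (X : list G).

Definition sch_vertex := {S : G -> Prop | exists g, S = rcoset K g}.

Lemma sch_vmul_proof (v : sch_vertex) (s : G) :
  exists g, set_rmul (proj1_sig v) s = rcoset K g.
Proof.
case: v => S [g HS] /=; exists (gmul g s); rewrite HS; exact: rcoset_rmul.
Qed.

Definition sch_vmul (v : sch_vertex) (s : G) : sch_vertex :=
  exist _ (set_rmul (proj1_sig v) s) (sch_vmul_proof v s).

Definition sch_label := {s : G | List.In s X \/ List.In (ginv s) X}.

Definition label_inv (s : sch_label) : sch_label.
Proof.
exists (ginv (proj1_sig s)); case: s => s [Hs|Hs] /=; [right; by rewrite ginvK | by left].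
Defined.

Definition sch_edge := (sch_vertex * sch_label)%type.

Definition sch_origin (e : sch_edge) : sch_vertex := e.1.
Definition sch_terminus (e : sch_edge) : sch_vertex := sch_vmul e.1 (proj1_sig e.2).
Definition sch_elabel (e : sch_edge) : G := proj1_sig e.2.
Definition sch_einv (e : sch_edge) : sch_edge := (sch_terminus e, label_inv e.2).

Definition sch_aut (fV : sch_vertex -> sch_vertex) (fE : sch_edge -> sch_edge) : Prop :=
  bijective fV /\ bijective fE /\
  (forall e, sch_origin (fE e) = fV (sch_origin e)) /\
  (forall e, sch_terminus (fE e) = fV (sch_terminus e)) /\
  (forall e, sch_einv (fE e) = fE (sch_einv e)).

Definition label_preserving (fE : sch_edge -> sch_edge) : Prop :=
  forall e, sch_elabel (fE e) = sch_elabel e.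

Definition aut_orbit (v u : sch_vertex) : Prop :=
  exists fV fE, sch_aut fV fE /\ fV v = u.

Definition X_orbit (v u : sch_vertex) : Prop :=
  exists fV fE, sch_aut fV fE /\ label_preserving fE /\ fV v = u.

End Schreier.
End Groups.

(* The stabiliser of a coset K g is the conjugate g^-1 K g, a group of prime
   order, so any nontrivial element fixing two vertices K g and K g' forces
   g' g^-1 to normalise K; left multiplication by it is then a label-preserving
   automorphism carrying K g to K g'.  Hence the vertices fixed by one
   nontrivial element lie in a single X-orbit.  A word w0 of length n spelling
   the nontrivial element g^-1 k g labels a closed walk at v = K g.  An
   automorphism maps closed walks of length n at v injectively onto closed walks
   at its image u; since v has strictly more closed walks of length n than there
   are words of length n with trivial product, u is fixed by the nontrivial
   product of some word of length n.  There are finitely many such words, and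
   each of them contributes at most one X-orbit. *)
From mathcomp Require Import all_boot zify.
From Stdlib Require List ProofIrrelevance FinFun Classical_Prop
  FunctionalExtensionality PropExtensionality.
Set Implicit Arguments. Unset Strict Implicit. Unset Printing Implicit Defensive.

Section GroupFacts.
Variable G : group.
Implicit Types x y n : G.

Lemma gmulKg x y : gmul (ginv x) (gmul x y) = y.
Proof. by rewrite gmulA gmulVg gmul1g. Qed.

Lemma gmulKVg x y : gmul x (gmul (ginv x) y) = y.
Proof. by rewrite gmulA gmulgV gmul1g. Qed.

Lemma gmulgK x y : gmul (gmul y x) (ginv x) = y.
Proof. by rewrite -gmulA gmulgV gmulg1. Qed.

Lemma gmulgKV x y : gmul (gmul y (ginv x)) x = y.
Proof. by rewrite -gmulA gmulVg gmulg1. Qed.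

Lemma ginv_unique x y : gmul x y = gone G -> ginv x = y.
Proof. by move=> xy1; rewrite -[RHS](gmulKg x) xy1 gmulg1. Qed.

Lemma ginvM x y : ginv (gmul x y) = gmul (ginv y) (ginv x).
Proof. by apply: ginv_unique; rewrite -gmulA gmulKVg gmulgV. Qed.

Lemma ginv1 : ginv (gone G) = gone G.
Proof. by apply: ginv_unique; rewrite gmul1g. Qed.

Definition gconj n x : G := gmul n (gmul x (ginv n)).

Lemma gconj1 n : gconj n (gone G) = gone G.
Proof. by rewrite /gconj gmul1g gmulgV. Qed.

Lemma gconjM n x y : gconj n (gmul x y) = gmul (gconj n x) (gconj n y).
Proof. by rewrite /gconj !gmulA gmulgKV. Qed.

Lemma gconj_comp m n x : gconj m (gconj n x) = gconj (gmul m n) x.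
Proof. by rewrite /gconj ginvM !gmulA. Qed.

Lemma gconjK n x : gconj (ginv n) (gconj n x) = x.
Proof. by rewrite gconj_comp gmulVg /gconj ginv1 gmul1g gmulg1. Qed.

Lemma gconjKV n x : gconj n (gconj (ginv n) x) = x.
Proof. by rewrite -{1}(ginvK n) gconjK. Qed.

Lemma gconj_eq1 n x : gconj n x = gone G -> x = gone G.
Proof. by move=> nx1; rewrite -(gconjK n x) nx1 gconj1. Qed.

Lemma gpowD x a b : gpow x (a + b) = gmul (gpow x a) (gpow x b).
Proof.
elim: b => [|b IHb]; first by rewrite addn0 gmulg1.
by rewrite addnS /= IHb gmulA.
Qed.

Lemma gpow1 j : gpow (gone G) j = gone G.
Proof. by elim: j => //= j ->; rewrite gmul1g. Qed.

Lemma gpowM x a b : gpow x (a * b) = gpow (gpow x a) b.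
Proof.
elim: b => [|b IHb]; first by rewrite muln0.
by rewrite mulnS addnC gpowD IHb.
Qed.

Lemma gconj_gpow n x j : gconj n (gpow x j) = gpow (gconj n x) j.
Proof. by elim: j => [|j IHj] /=; rewrite ?gconj1 // gconjM IHj. Qed.

Section Order.
Variables (x : G) (p : nat).
Hypothesis x_order : has_order x p.

Lemma gpow_modn N : gpow x N = gpow x (N %% p).
Proof.
have [_ [xp1 _]] := x_order.
by rewrite {1}(divn_eq N p) gpowD mulnC gpowM xp1 gpow1 gmul1g.
Qed.

Lemma has_order_neq1 : 1 < p -> x <> gone G.
Proof.
move=> p_gt1 x1; have [_ [_ minp]] := x_order.
by apply: (minp 1); rewrite ?p_gt1 //= gmul1g.
Qed.

Lemma gpow_generates (a : nat) : prime p -> gpow x a <> gone G ->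
  exists c, gpow (gpow x a) c = x.
Proof.
move=> p_pr xa1.
have p_ndvd_a : ~~ (p %| a).
  by apply: contra_notN xa1; rewrite /dvdn gpow_modn => /eqP ->.
have a_gt0 : 0 < a by case: a {xa1} p_ndvd_a; rewrite ?dvdn0.
have : coprime a p by rewrite coprime_sym prime_coprime.
case/(coprimeP _ a_gt0) => [[u v]] /= uv1; exists u; rewrite -gpowM.
have -> : a * u = v * p + 1.
  have : v * p < u * a by rewrite -subn_gt0 uv1.
  by move: uv1; rewrite mulnC; lia.
by rewrite gpow_modn modnMDl modn_small ?prime_gt1 //= gmul1g.
Qed.

End Order.
End GroupFacts.

Lemma set_ext (T : Type) (S1 S2 : T -> Prop) : (forall t, S1 t <-> S2 t) -> S1 = S2.
Proof.
move=> S12; apply: FunctionalExtensionality.functional_extensionality => t.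
exact: PropExtensionality.propositional_extensionality.
Qed.

Lemma sig_eq (T : Type) (P : T -> Prop) (x y : sig P) : sval x = sval y -> x = y.
Proof. by apply: eq_sig_hprop => t; apply: ProofIrrelevance.proof_irrelevance. Qed.

Lemma list_choice (T U : Type) (R : T -> U -> Prop) (s : list T) :
  exists zs : list U,
    (forall z, List.In z zs -> exists2 t, List.In t s & R t z) /\
    forall t, List.In t s -> (exists z, R t z) -> exists2 z, List.In z zs & R t z.
Proof.
elim: s => [|t s [zs [zs_sub zs_rep]]]; first by exists [::].
have [[z Rtz]|noR] := Classical_Prop.classic (exists z, R t z).
- exists (z :: zs); split.
    by move=> y [<-|/zs_sub [t' ? ?]]; [exists t; first left | exists t'; first right].
  move=> t' [<-|/zs_rep rep] Ht'; first by exists z; first left.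
  by have [y ? ?] := rep Ht'; exists y; first right.
- exists zs; split; first by move=> y /zs_sub [t' ? ?]; exists t'; first right.
  by move=> t' [<- //|/zs_rep].
Qed.

Lemma exists_NoDup_sublist (T : Type) (P : T -> Prop) (s : list T) :
  exists s', List.NoDup s' /\ forall x, List.In x s' <-> List.In x s /\ P x.
Proof.
elim: s => [|t s [s' [uniq_s' s'E]]].
  by exists [::]; split=> [|x]; [constructor | split=> -[]].
have [new|old] := Classical_Prop.classic (P t /\ ~ List.In t s').
- exists (t :: s'); split; first by constructor; case: new.
  move=> x /=; split=> [[<-|/s'E [sx Px]]|[[<-|sx] Px]].
  + by split; [left | case: new].
  + by split; first right.
  + by left.
  + by right; apply/s'E.
- exists s'; split=> // x; rewrite s'E /=; split=> [[sx Px]|[[<-|sx] Px]] //.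
  + by split; first right.
  + have /s'E [] // : List.In t s'.
      by apply: Classical_Prop.NNPP => nts; apply: old.
Qed.

Fixpoint words (T : Type) (s : list T) (n : nat) : list (list T) :=
  if n is n'.+1 then List.flat_map (fun a => List.map (cons a) (words s n')) s
  else [:: [::]].

Lemma in_words (T : Type) (s : list T) n w :
  (forall a, List.In a s) -> List.In w (words s n) <-> size w = n.
Proof.
move=> s_full; elim: n w => [|n IHn] [|a w] /=.
- by split=> // _; left.
- by split=> // -[].
- by split=> // /List.in_flat_map [b [_ /List.in_map_iff [? []]]].
- split=> [/List.in_flat_map [b [_ /List.in_map_iff [w' [[_ <-] /IHn ->]]]] //|[wn]].
  by apply/List.in_flat_map; exists a; split=> //; apply: List.in_map; apply/IHn.
Qed.

Section SchreierGraph.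
Variables (A : group) (K : A -> Prop) (X : list A).
Local Notation V := (sch_vertex K).
Local Notation L := (sch_label X).
Local Notation E := (sch_edge K X).

Lemma vmul1 (x : V) : sch_vmul x (gone A) = x.
Proof.
apply: sig_eq; apply: set_ext => t /=; split; first by case=> h [? ->]; rewrite gmulg1.
by move=> xt; exists t; rewrite gmulg1.
Qed.

Lemma vmulA (x : V) a b : sch_vmul (sch_vmul x a) b = sch_vmul x (gmul a b).
Proof.
apply: sig_eq; apply: set_ext => t /=; split.
- by case=> h [[h' [? ->]] ->]; exists h'; rewrite gmulA.
- by case=> h [? ->]; exists (gmul h a); split; [exists h | rewrite gmulA].
Qed.

Lemma sch_aut_comp fV fE gV gE :
  sch_aut fV fE -> sch_aut gV gE -> sch_aut (K:=K) (X:=X) (gV \o fV) (gE \o fE).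
Proof.
case=> bfV [bfE [fo [ft fi]]] [bgV [bgE [go [gt gi]]]].
by do !split; try exact: bij_comp; move=> e /=; rewrite ?go ?fo ?gt ?ft ?gi ?fi.
Qed.

Lemma aut_orbit_trans (v z u : V) : aut_orbit X v z -> X_orbit X z u -> aut_orbit X v u.
Proof.
case=> fV [fE [f_aut fvz]] [gV [gE [g_aut [_ gzu]]]].
by exists (gV \o fV), (gE \o fE); split; [exact: sch_aut_comp | rewrite /= fvz].
Qed.

Definition fixes (x : V) (h : A) : Prop := sch_vmul x h = x.

Definition word_prod (w : list L) : A := foldr (fun s acc => gmul (sval s) acc) (gone A) w.

Lemma word_prod_rcons w s : word_prod (rcons w s) = gmul (word_prod w) (sval s).
Proof. by elim: w => [|t w IHw] /=; rewrite ?gmulg1 ?gmul1g // IHw gmulA. Qed.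

Lemma generated_word g : generated X g -> exists w, word_prod w = g.
Proof.
elim=> [|g' x _ [w <-] Xx|g' x _ [w <-] Xx]; first by exists [::].
- by exists (rcons w (exist _ x (or_introl Xx))); rewrite word_prod_rcons.
- have Xx' : List.In (ginv x) X \/ List.In (ginv (ginv x)) X by rewrite ginvK; right.
  by exists (rcons w (exist _ (ginv x) Xx')); rewrite word_prod_rcons.
Qed.

Lemma label_listed : exists ls : list L, forall l, List.In l ls.
Proof.
have [ls [_ ls_rep]] :=
  list_choice (fun (t : A) (l : L) => sval l = t) (X ++ List.map (@ginv A) X).
exists ls => l; have Yl : List.In (sval l) (X ++ List.map (@ginv A) X).
  apply/List.in_app_iff; case: (svalP l) => ?; [by left | right].
  by rewrite -[sval l]ginvK; apply: List.in_map.
by have [l' ? /sig_eq <-] := ls_rep _ Yl (ex_intro _ l erefl).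
Qed.

Lemma words_of_size_listed n :
  exists W : list (list L), forall w, List.In w W <-> size w = n.
Proof. by have [ls ls_full] := label_listed; exists (words ls n) => w; apply: in_words. Qed.

Section ImageWord.
Variables (fV : V -> V) (fE : E -> E).
Hypothesis f_aut : sch_aut fV fE.

Fixpoint image_word (x : V) (w : list L) : list L :=
  if w is s :: w' then (fE (x, s)).2 :: image_word (sch_vmul x (sval s)) w' else [::].

Lemma size_image_word x w : size (image_word x w) = size w.
Proof. by elim: w x => [|s w IHw] x //=; rewrite IHw. Qed.

Lemma image_word_prod x w :
  sch_vmul (fV x) (word_prod (image_word x w)) = fV (sch_vmul x (word_prod w)).
Proof.
have [_ [_ [f_orig [f_term _]]]] := f_aut.
elim: w x => [|s w IHw] x /=; first by rewrite !vmul1.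
have step : sch_vmul (fV x) (sval (fE (x, s)).2) = fV (sch_vmul x (sval s)).
  have := f_term (x, s); rewrite /sch_terminus /= => <-.
  by have := f_orig (x, s); rewrite /sch_origin /= => ->.
by rewrite -!vmulA step IHw.
Qed.

Lemma image_word_inj x : FinFun.Injective (image_word x).
Proof.
have [_ [[fE' fEK _] [f_orig _]]] := f_aut.
move=> w; elim: w x => [|s w IHw] x [|s' w'] //= [eq_lab eq_tail].
have eq_edge : fE (x, s) = fE (x, s').
  move: (f_orig (x, s)) (f_orig (x, s')) eq_lab; rewrite /sch_origin /=.
  by case: (fE (x, s)) => ? ?; case: (fE (x, s')) => ? ? /= -> -> ->.
have ss' : s = s' by case: (can_inj fEK eq_edge).
move: eq_tail; rewrite -ss' => eq_tail.
by rewrite (IHw _ _ eq_tail).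
Qed.

(* Closed walks at v map injectively to closed walks at fV v, and every word
   with trivial product is a closed walk at any vertex. *)
Lemma aut_nontrivial_loop (v : V) w0 :
  word_prod w0 <> gone A -> fixes v (word_prod w0) ->
  exists w, size w = size w0 /\ word_prod w <> gone A /\ fixes (fV v) (word_prod w).
Proof.
move=> w0_neq1 v_w0; apply: Classical_Prop.NNPP => no_loop.
have triv w : size w = size w0 -> fixes (fV v) (word_prod w) -> word_prod w = gone A.
  by move=> ? ?; apply: Classical_Prop.NNPP => ?; apply: no_loop; exists w.
have [W W_size] := words_of_size_listed (size w0).
have [Cv [uniq_Cv Cv_E]] := exists_NoDup_sublist (fun w => fixes v (word_prod w)) W.
have [T [uniq_T T_E]] := exists_NoDup_sublist (fun w => word_prod w = gone A) W.
have Cv_le_T : (length Cv <= length T)%coq_nat.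
  rewrite -(List.length_map (image_word v)); apply: List.NoDup_incl_length.
    by apply: FinFun.Injective_map_NoDup; first exact: image_word_inj.
  move=> _ /List.in_map_iff [w [<- /Cv_E [/W_size w_size v_w]]].
  have iw_size : size (image_word v w) = size w0 by rewrite size_image_word.
  apply/T_E; split; first exact/W_size.
  by apply: triv; rewrite // /fixes image_word_prod v_w.
have T_lt_Cv : (length (w0 :: T) <= length Cv)%coq_nat.
  apply: List.NoDup_incl_length.
    by constructor=> // /T_E [].
  move=> w [<-|/T_E [Ww w1]]; apply/Cv_E; split=> //; first exact/W_size.
  by rewrite /fixes w1 vmul1.
by move: Cv_le_T T_lt_Cv => /=; lia.
Qed.

End ImageWord.

Definition normalizes (n : A) : Prop := forall h, K h -> K (gconj n h).

Definition lmul (n : A) (S : A -> Prop) : A -> Prop :=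
  fun t => exists2 s, S s & t = gmul n s.

Lemma lmulK n S : lmul (ginv n) (lmul n S) = S.
Proof.
apply: set_ext => t; split; first by case=> _ [s ? ->] ->; rewrite gmulKg.
by move=> St; exists (gmul n t); [exists t | rewrite gmulKg].
Qed.

Lemma lmul_rmul n S s : lmul n (set_rmul S s) = set_rmul (lmul n S) s.
Proof.
apply: set_ext => t; split.
- by case=> _ [u [Su ->]] ->; exists (gmul n u); split; [exists u | rewrite gmulA].
- by case=> _ [[u Su ->] ->]; exists (gmul u s); [exists u | rewrite gmulA].
Qed.

Section Translation.
Variable n : A.
Hypotheses (n_norm : normalizes n) (nV_norm : normalizes (ginv n)).

Lemma lmul_rcoset c : lmul n (rcoset K c) = rcoset K (gmul n c).
Proof.
apply: set_ext => t; split.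
- case=> _ [h [Kh ->]] ->; exists (gconj n h); split; first exact: n_norm.
  by rewrite /gconj -!gmulA gmulKg.
- case=> h [Kh ->]; exists (gmul (gconj (ginv n) h) c).
    by exists (gconj (ginv n) h); split; first exact: nV_norm.
  by rewrite /gconj ginvK -!gmulA gmulKVg.
Qed.

Lemma lmul_vertex_proof (x : V) : exists g, lmul n (sval x) = rcoset K g.
Proof. by have [c ->] := svalP x; exists (gmul n c); exact: lmul_rcoset. Qed.

Definition ltrans (x : V) : V := exist _ _ (lmul_vertex_proof x).
Definition ltrans_edge (e : E) : E := (ltrans e.1, e.2).

End Translation.

Lemma ltrans_aut n (n_norm : normalizes n) (nV_norm : normalizes (ginv n)) :
  sch_aut (ltrans n_norm nV_norm) (ltrans_edge n_norm nV_norm).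
Proof.
have nVV_norm : normalizes (ginv (ginv n)) by rewrite ginvK.
have tK : cancel (ltrans n_norm nV_norm) (ltrans nV_norm nVV_norm).
  by move=> x; apply: sig_eq; rewrite /= lmulK.
have tKV : cancel (ltrans nV_norm nVV_norm) (ltrans n_norm nV_norm).
  by move=> x; apply: sig_eq; rewrite /= -{1}(ginvK n) lmulK.
have t_term e : sch_terminus (ltrans_edge n_norm nV_norm e)
                = ltrans n_norm nV_norm (sch_terminus e).
  by case: e => x s; apply: sig_eq; rewrite /= lmul_rmul.
split; first by exists (ltrans nV_norm nVV_norm).
split.
  by exists (ltrans_edge nV_norm nVV_norm); case=> x s; rewrite /ltrans_edge /= ?tK ?tKV.
split=> //; split; first exact: t_term.
by case=> x s; rewrite /sch_einv t_term.
Qed.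

Lemma X_orbit_lmul (x y : V) n g : normalizes n -> normalizes (ginv n) ->
  sval x = rcoset K g -> sval y = rcoset K (gmul n g) -> X_orbit X x y.
Proof.
move=> n_norm nV_norm xE yE.
exists (ltrans n_norm nV_norm), (ltrans_edge n_norm nV_norm).
split; first exact: ltrans_aut.
by split=> //; apply: sig_eq; rewrite /= xE lmul_rcoset.
Qed.

Section Subgroup.
Hypotheses (K1 : K (gone A)) (KM : forall a b, K a -> K b -> K (gmul a b))
  (KV : forall a, K a -> K (ginv a)).

Lemma rcoset_eq a b : rcoset K a = rcoset K b <-> K (gmul a (ginv b)).
Proof.
split=> [abE|Kab].
- have : rcoset K b a by rewrite -abE; exists (gone A); rewrite gmul1g.
  by case=> h [Kh ->]; rewrite gmulgK.
- apply: set_ext => t; split; case=> h [Kh ->].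
  + by exists (gmul h (gmul a (ginv b))); rewrite -!gmulA gmulVg gmulg1; split; auto.
  + exists (gmul h (ginv (gmul a (ginv b)))); split; first by auto.
    by rewrite ginvM ginvK -!gmulA gmulVg gmulg1.
Qed.

Lemma fixes_rcoset (x : V) g h : sval x = rcoset K g -> fixes x h <-> K (gconj g h).
Proof.
move=> xE; rewrite /gconj gmulA -rcoset_eq -rcoset_rmul -xE; split.
- by move=> xh; rewrite -{2}xh.
- by move=> xhE; apply: sig_eq.
Qed.

End Subgroup.
End SchreierGraph.

Section PrimeCyclic.
Variables (A : group) (X : list A) (p : nat) (k : A).
Hypotheses (p_prime : prime p) (k_order : has_order k p).
Local Notation K := (cyclic_sub k).
Local Notation V := (sch_vertex K).

Lemma cyclic_sub1 : K (gone A).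
Proof. by exists 0. Qed.

Lemma cyclic_subM a b : K a -> K b -> K (gmul a b).
Proof. by case=> i -> [j ->]; exists (i + j); rewrite gpowD. Qed.

Lemma cyclic_subV a : K a -> K (ginv a).
Proof.
case=> i ->; exists (i * p.-1); apply: ginv_unique.
have [p_gt0 [kp1 _]] := k_order.
rewrite -gpowD (_ : i + i * p.-1 = p * i) ?gpowM ?kp1 ?gpow1 //.
by rewrite -{1}(muln1 i) -mulnDr add1n prednK // mulnC.
Qed.

Lemma fixes_cyclic (x : V) g h : sval x = rcoset K g -> fixes x h <-> K (gconj g h).
Proof.
by apply: fixes_rcoset; [exact: cyclic_sub1 | exact: cyclic_subM | exact: cyclic_subV].
Qed.

(* k^a generates K, so conjugation by n maps K into the group generated by k^b. *)
Lemma cyclic_normalizes n a b :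
  gconj n (gpow k a) = gpow k b -> gpow k a <> gone A -> normalizes K n.
Proof.
move=> nab ka1 _ [m ->].
have [c kac] := gpow_generates k_order p_prime ka1.
have km : gpow k m = gpow (gpow k a) (c * m) by rewrite gpowM kac.
by exists (b * (c * m)); rewrite km gconj_gpow nab -gpowM.
Qed.

Lemma X_orbit_of_common_fixed (x y : V) h :
  h <> gone A -> fixes x h -> fixes y h -> X_orbit X x y.
Proof.
move=> h1 xh yh; have [g xE] := svalP x; have [g' yE] := svalP y.
have [a ha] := (fixes_cyclic h xE).1 xh; have [b hb] := (fixes_cyclic h yE).1 yh.
set n := gmul g' (ginv g).
have nab : gconj n (gpow k a) = gpow k b by rewrite -ha -hb gconj_comp gmulgKV.
have nba : gconj (ginv n) (gpow k b) = gpow k a by rewrite -nab gconjK.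
have ka1 : gpow k a <> gone A by rewrite -ha => /gconj_eq1.
have kb1 : gpow k b <> gone A by rewrite -hb => /gconj_eq1.
apply: (X_orbit_lmul X (cyclic_normalizes nab ka1) (cyclic_normalizes nba kb1) xE).
by rewrite yE /n gmulgKV.
Qed.

End PrimeCyclic.

Theorem proposition6p6 (A : group) (X : list A) (hX : generates X)
    (p : nat) (hp : prime p) (k : A) (hk : has_order k p) :
  forall v : sch_vertex (cyclic_sub k),
    exists ws : list (sch_vertex (cyclic_sub k)),
      forall u : sch_vertex (cyclic_sub k),
        aut_orbit X v u <-> exists w, List.In w ws /\ X_orbit X w u.
Proof.
move=> v; have [g vE] := svalP v.
have [w0 w0E] := generated_word (hX (gconj (ginv g) k)).
have w0_neq1 : word_prod w0 <> gone A.
  by rewrite w0E => /gconj_eq1; apply: has_order_neq1 hk (prime_gt1 hp).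
have v_w0 : fixes v (word_prod w0).
  by apply/(fixes_cyclic hk _ vE); rewrite w0E gconjKV; exists 1; rewrite /= gmul1g.
have [W W_size] := words_of_size_listed X (size w0).
have [ws [ws_orbit ws_rep]] := list_choice (fun w z =>
  aut_orbit X v z /\ word_prod w <> gone A /\ fixes z (word_prod w)) W.
exists ws => u; split.
- case=> fV [fE [f_aut <-]].
  have [w [w_size [w_neq1 fv_w]]] := aut_nontrivial_loop f_aut w0_neq1 v_w0.
  have [|z ws_z [_ [_ z_w]]] := ws_rep w (proj2 (W_size w) w_size).
    by exists (fV v); split=> //; exists fV, fE.
  by exists z; split=> //; exact: (X_orbit_of_common_fixed X hp hk w_neq1 z_w fv_w).
- by case=> z [/ws_orbit [w _ [v_z _]] z_u]; exact: aut_orbit_trans v_z z_u.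
Qed.
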